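(* Let $p_1,p_2$ be distinct odd primes. (1) If $n=p_1p_2$, then $\Omega_2(n)\neq\emptyset$. (2) If $n=p_1p_2^2n'$ or $n=2p_1p_2n'$ for some integer $n'\geq 1$, then $\Omega_2(n)=\emptyset$.
   Context: For an integer $n\ge 2$, let $\phi_2(n)=\{k\mid 0\le k\le n-1,\ \gcd(k,n)=2^w\text{ for some }w\ge0\}$, where an integer $k$ is regarded as an element of $\phi_2(n)$ when its residue modulo $n$ (taken in $\{0,\dots,n-1\}$) is, and $\gcd(0,n)=n$. Define $\Omega_2(n)$ to be the set of $i_0\in\mathbb{Z}_n$ such that for every odd integer $i$ with $1\le i\le n$ and $i\notin\phi_2(n)$ (i.e. $\gcd(i,n)$ is not a power of $2$), the element $i_0-i$ is invertible in $\mathbb{Z}_n$. *)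

From HB Require Import structures.
From mathcomp Require Import all_boot all_order all_algebra.
Set Implicit Arguments. Unset Strict Implicit. Unset Printing Implicit Defensive.
Import GRing.Theory.

(* k (an integer, regarded via its residue mod n in {0..n-1}) lies in phi_2(n)
   iff gcd(k mod n, n) is a power of 2 (with gcd(0,n) = n, as gcdn 0 n = n). *)
Definition in_phi2 (n k : nat) : Prop := exists w : nat, gcdn (k %% n) n = 2 ^ w.

Definition in_Omega2 (n : nat) (i0 : 'Z_n) : Prop :=
  forall i : nat, odd i -> 1 <= i <= n -> ~ in_phi2 n i ->
    ((i0 - (i%:R : 'Z_n))%R \is a GRing.unit).

From HB Require Import structures.
From mathcomp Require Import all_boot all_order all_algebra.
From mathcomp Require Import zify.
Set Implicit Arguments.
Unset Strict Implicit.
Unset Printing Implicit Defensive.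
Import GRing.Theory.

(* For i <= n the class of i0 - i in Z_n is that of i0 + (n - i), so it is a
   unit iff no prime factor p of n satisfies i0 = i (mod p).
   (1) For n = p1 p2 take i0 = 2 p1 + 2 p2.  An odd i <= n outside phi_2(n) is
   a multiple k p2 (or k p1) with k odd and k <= p1; then i0 = i (mod p1)
   would give p1 | (k - 2) p2, impossible since 0 < |k - 2| < p1, and
   i0 = i (mod p2) would give p2 | 2 p1.
   (2) If p1 p2 | n and 2 p1 p2 <= n, then for any i0 the Chinese remainder
   theorem gives i < 2 p1 p2 with i = i0 (mod p1) and i = p2 (mod 2 p2):
   i is odd, divisible by the odd prime p2 (so not in phi_2(n)), and
   p1 divides both n and i0 - i. *)

Lemma unit_Zp_natrB (n a i : nat) : 1 < n -> i <= n ->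
  ((a%:R - i%:R : 'Z_n)%R \is a GRing.unit) = coprime n (a + (n - i)).
Proof.
by move=> n_gt1 le_in; rewrite -unitZpE // natrD natrB // pchar_Zp // add0r addrC.
Qed.

Lemma dvdn_addB_eqmod (p n a i : nat) : p %| n -> i <= n ->
  (p %| a + (n - i)) = (a == i %[mod p]).
Proof.
move=> dvd_pn le_in.
by rewrite -(eqn_modDr (n - i)) subnKC // (eqP dvd_pn).
Qed.

Lemma in_phi2_coprime (n i : nat) : coprime n i -> in_phi2 n i.
Proof. by move=> co_ni; exists 0; rewrite gcdn_modl gcdnC; apply/eqP. Qed.

Lemma not_in_phi2_odd_prime_dvd (n i p : nat) :
  prime p -> odd p -> p %| n -> p %| i -> ~ in_phi2 n i.
Proof.
move=> p_pr p_odd dvd_pn dvd_pi [w gcd_2w].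
have : p %| 2 ^ w by rewrite -gcd_2w gcdn_modl dvdn_gcd dvd_pi dvd_pn.
rewrite Euclid_dvdX // (dvdn_prime2 p_pr (isT : prime 2)) => /andP[/eqP p2].
by rewrite p2 in p_odd.
Qed.

Lemma coprime_odd_prime_double (p q : nat) :
  prime p -> prime q -> odd p -> p != q -> coprime p (2 * q).
Proof.
move=> p_pr q_pr p_odd neq_pq.
rewrite coprimeMr !prime_coprime // (dvdn_prime2 p_pr (isT : prime 2)).
by rewrite (dvdn_prime2 p_pr q_pr) neq_pq andbT; apply: contraTneq p_odd => ->.
Qed.

Lemma double_sum_neq_mod (p q i : nat) :
  prime p -> prime q -> odd p -> p != q -> odd i -> i <= p * q ->
  (p %| i) || (q %| i) -> 2 * p + 2 * q != i %[mod p].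
Proof.
move=> p_pr q_pr p_odd neq_pq i_odd le_i /orP[dvd_pi | /dvdnP[k def_i]];
  rewrite modnMDl.
  by rewrite (eqP dvd_pi) -/(dvdn p (2 * q)) -prime_coprime
       ?coprime_odd_prime_double.
have co_pq : coprime p q by rewrite prime_coprime // dvdn_prime2.
have k_odd : odd k by move: i_odd; rewrite def_i oddM => /andP[].
have le_kp : k <= p by rewrite -(leq_pmul2r (prime_gt0 q_pr)) -def_i.
have p_gt2 := odd_prime_gt2 p_odd p_pr.
rewrite def_i; have [le_k2 | lt_2k] := leqP k 2.
  rewrite eqn_mod_dvd ?leq_mul2r ?le_k2 ?orbT // -mulnBl Gauss_dvdl //.
  by case: k k_odd le_k2 {def_i le_kp} => [|[|[|]]] //; rewrite dvdn1; lia.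
rewrite eq_sym eqn_mod_dvd ?leq_mul2r ?(ltnW lt_2k) ?orbT // -mulnBl Gauss_dvdl //.
by apply/negP => /dvdn_leq; lia.
Qed.

Lemma exists_odd_multiple_eqmod (p q m : nat) : coprime p (2 * q) -> odd q ->
  exists i, [/\ i < p * (2 * q), odd i, q %| i & i = m %[mod p]].
Proof.
move=> co_p2q q_odd.
have q_gt0 : 0 < q by case: q q_odd {co_p2q}.
have p_gt0 : 0 < p.
  by move: co_p2q; rewrite lt0n; apply: contraTneq => ->; rewrite /coprime gcd0n; lia.
set i := chinese p (2 * q) m q %% (p * (2 * q)).
have i_mod2q : i %% (2 * q) = q.
  rewrite (modn_dvdm _ (dvdn_mull p (dvdnn _))) chinese_modr // modn_small //.
  lia.
exists i; split.
- by rewrite ltn_pmod // !muln_gt0 p_gt0 q_gt0.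
- have := modn_dvdm i (dvdn_mulr q (dvdnn 2)).
  by rewrite i_mod2q !modn2 q_odd; case: (odd i).
- by apply/eqP; rewrite -(modn_dvdm i (dvdn_mull 2 (dvdnn q))) i_mod2q modnn.
- by rewrite (modn_dvdm _ (dvdn_mulr _ (dvdnn p))) chinese_modl.
Qed.

Lemma not_in_Omega2 (n p q : nat) (i0 : 'Z_n) :
  prime p -> prime q -> odd p -> odd q -> p != q ->
  p %| n -> q %| n -> 2 * p * q <= n -> ~ in_Omega2 i0.
Proof.
move=> p_pr q_pr p_odd q_odd neq_pq dvd_pn dvd_qn le_2pq Omega_i0.
have co_p2q := coprime_odd_prime_double p_pr q_pr p_odd neq_pq.
have [i [lt_i i_odd dvd_qi eq_i]] := exists_odd_multiple_eqmod i0 co_p2q q_odd.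
have le_in : i <= n by rewrite (leq_trans (ltnW lt_i)) // mulnCA mulnA.
have n_gt1 : 1 < n.
  by apply: leq_trans le_2pq; rewrite -mulnA leq_pmulr // muln_gt0 !prime_gt0.
have := Omega_i0 i i_odd; rewrite (odd_gt0 i_odd) le_in.
move=> /(_ isT (not_in_phi2_odd_prime_dvd q_pr q_odd dvd_qn dvd_qi)).
rewrite -(natr_Zp i0) unit_Zp_natrB // => /(coprime_dvdl dvd_pn).
by rewrite prime_coprime // dvdn_addB_eqmod // eq_i eqxx.
Qed.

Lemma in_Omega2_double_sum (p q : nat) :
  prime p -> prime q -> odd p -> odd q -> p != q ->
  in_Omega2 ((2 * p + 2 * q)%:R : 'Z_(p * q))%R.
Proof.
move=> p_pr q_pr p_odd q_odd neq_pq i i_odd /andP[_ le_i] not_phi2.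
have dvd_i : (p %| i) || (q %| i).
  apply/negPn/negP; rewrite negb_or => ndvd_i; apply/not_phi2/in_phi2_coprime.
  by rewrite coprimeMl !prime_coprime.
have pq_gt1 : 1 < p * q by rewrite (leq_trans (prime_gt1 p_pr)) // leq_pmulr // prime_gt0.
rewrite unit_Zp_natrB // coprimeMl !prime_coprime //.
rewrite (dvdn_addB_eqmod _ (dvdn_mulr q (dvdnn p))) //.
rewrite (dvdn_addB_eqmod _ (dvdn_mull p (dvdnn q))) //.
apply/andP; split; first exact: double_sum_neq_mod.
rewrite addnC; apply: double_sum_neq_mod; rewrite // 1?eq_sym 1?mulnC 1?orbC //.
Qed.

Theorem lemma7p3 (p1 p2 : nat) :
  prime p1 -> prime p2 -> odd p1 -> odd p2 -> p1 != p2 ->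
  (forall n : nat, n = p1 * p2 -> exists i0 : 'Z_n, in_Omega2 i0) /\
  (forall n n' : nat, 1 <= n' ->
     (n = p1 * p2 ^ 2 * n' \/ n = 2 * p1 * p2 * n') ->
     forall i0 : 'Z_n, ~ in_Omega2 i0).
Proof.
move=> p1_pr p2_pr p1_odd p2_odd neq_p12.
split=> [n -> | n n' n'_gt0 def_n i0].
  by exists (2 * p1 + 2 * p2)%:R%R; apply: in_Omega2_double_sum.
have p2_gt2 := odd_prime_gt2 p2_odd p2_pr.
apply: (not_in_Omega2 p1_pr p2_pr) => //; case: def_n => ->.
- by rewrite -!mulnA dvdn_mulr.
- by rewrite -!mulnA dvdn_mull ?dvdn_mulr.
- by rewrite mulnAC dvdn_mull // dvdn_exp.
- by rewrite dvdn_mulr // dvdn_mull.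
- apply: (@leq_trans (p1 * p2 * p2)).
    by rewrite [2 * p1]mulnC -mulnA [2 * p2]mulnC mulnA leq_mul2l ltnW ?orbT.
  by rewrite expnS expn1 mulnA leq_pmulr.
- by rewrite leq_pmulr.
Qed.
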